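(* For all positive integers $a$ and $n$ there exists a positive integer $n'$ such that the following holds. Let $G$ and $H$ be finite graphs and let $(A_x: x\in V(H))$ be an $H$-partition of $G$ with $|A_x|\le a$ for all $x\in V(H)$. If $G$ contains a path on $n'$ vertices, then for every $w\in V(H)$ the graph $H-w$ contains a path on $n$ vertices.
   Context: A partition of $G$ is a set of pairwise disjoint sets of vertices (parts) covering $V(G)$. The quotient $G/\mathcal{P}$ has vertex set $\mathcal{P}$, with distinct parts adjacent iff some vertex of one is adjacent in $G$ to some vertex of the other. An $H$-partition of $G$ is a partition $(A_x: x\in V(H))$ of $V(G)$ indexed by $V(H)$ such that $H$ is (identified with) its quotient, i.e. for distinct $x,y$, $xy\in E(H)$ iff some vertex of $A_x$ is adjacent in $G$ to some vertex of $A_y$. *)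

From mathcomp Require Import all_boot.
Set Implicit Arguments. Unset Strict Implicit. Unset Printing Implicit Defensive.

Definition simple_graph (T : finType) (e : rel T) : Prop :=
  symmetric e /\ irreflexive e.

Definition is_path_in (T : finType) (e : rel T) (P : pred T) (n : nat) (s : seq T) : Prop :=
  [/\ size s = n, uniq s, all P s & sorted e s].

Definition has_path (T : finType) (e : rel T) (n : nat) : Prop :=
  exists s : seq T, is_path_in e predT n s.

Definition has_path_minus (T : finType) (e : rel T) (w : T) (n : nat) : Prop :=
  exists s : seq T, is_path_in e (predC1 w) n s.

(* An H-partition of G, given by the part map f : V(G) -> V(H), i.e. A_x = f^-1(x):
   for distinct x, y, xy in E(H) iff some vertex of A_x is adjacent in G to some
   vertex of A_y. *)
Definition part (T U : finType) (f : T -> U) (x : U) : {set T} := [set u | f u == x].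

Definition is_H_partition (T U : finType) (eG : rel T) (eH : rel U) (f : T -> U) : Prop :=
  forall x y : U, x != y ->
    eH x y = [exists u, exists v, [&& u \in part f x, v \in part f y & eG u v]].

(** Map a long path of G to H through the partition.  Consecutive vertices go
    to equal or adjacent parts, so the image is a walk in H that may pause,
    and it visits every vertex of H at most a times because the parts have at
    most a vertices.  Removing the at most a visits to w leaves a w-free stretch
    of the walk of length at least about n'/(a+1).  Inside a walk visiting each
    vertex at most a times a path is grown greedily: after the last visit to the
    current vertex x, the walk moves to a neighbour y of x and never returns to
    x, so one recurses on the remainder starting at y, losing a factor a+1 in
    length at every step. *)

From mathcomp Require Import all_boot zify.
Set Implicit Arguments. Unset Strict Implicit. Unset Printing Implicit Defensive.

Definition reflc (T : eqType) (e : rel T) : rel T := fun u v => (u == v) || e u v.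

(* The run [u] is preceded by an element satisfying [p], or by [x0] when [l] is empty. *)
Lemma long_free_run (T : Type) (p : pred T) (m k : nat) (s : seq T) (x0 : T) :
  count p s <= k -> k * m.+1 + m <= size s ->
  exists l u r, [/\ s = l ++ u ++ r, ~~ has p u, m <= size u & (p x0 -> p (last x0 l))].
Proof.
elim: k s x0 => [|k IH] s x0 hc hs.
  exists [::], s, [::]; split => //; first by rewrite cats0.
  by rewrite has_count -leqNgt.
have [hp|hp] := boolP (has p s); last first.
  exists [::], s, [::]; split => //; first by rewrite cats0.
  by apply: leq_trans hs; rewrite leq_addl.
move: hc hs; case: (split_find hp) => y s1 s2 py hs1 hc hs.
have [hm|hm] := leqP m (size s1).
  by exists [::], s1, (y :: s2); split => //; rewrite cat_rcons.
have hs1_0 : count p s1 = 0 by apply/eqP; rewrite -leqn0 leqNgt -has_count.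
have [l [u [r [-> hu hmu hl]]]] : exists l u r,
    [/\ s2 = l ++ u ++ r, ~~ has p u, m <= size u & (p y -> p (last y l))].
  apply: IH.
  - by move: hc; rewrite count_cat -cats1 count_cat /= py hs1_0; lia.
  - by move: hs; rewrite size_cat size_rcons mulSn; nia.
exists (rcons s1 y ++ l), u, r; split => //; first by rewrite catA.
by rewrite last_cat last_rcons => _; exact: hl.
Qed.

Fixpoint walk_bound (a n : nat) : nat :=
  if n is n'.+1 then a * (walk_bound a n').+2 + (walk_bound a n').+1 else 0.

Lemma reflc_walk_path (U : eqType) (e : rel U) (a n : nat) (x : U) (t : seq U) :
  path (reflc e) x t -> (forall y, count_mem y (x :: t) <= a) -> walk_bound a n <= size t ->
  exists q, [/\ size q = n, uniq (x :: q), path e x q & {subset q <= t}].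
Proof.
elim: n x t => [|n IH] x t hw hc hs; first by exists [::].
have hcx : count (pred1 x) t <= a by have := hc x; rewrite /= eqxx; lia.
have [l [u [r [ht hu hsize hl]]]] := long_free_run (m := (walk_bound a n).+1) x hcx hs.
case: u ht hu hsize => [//|y t'] ht /norP [/= nyx xt'] hsize.
have {}hl : last x l = x by apply/eqP; apply: hl => /=.
have yt't : {subset y :: t' <= t} by rewrite ht; apply/mem_infix/infix_infix.
rewrite ht cat_path hl /= cat_path in hw; case/and3P: hw => _ hxy /andP [hwy _].
have {}hxy : e x y by move: hxy; rewrite /reflc eq_sym (negbTE nyx).
have [q [hq uq pq sq]] : exists q,
    [/\ size q = n, uniq (y :: q), path e y q & {subset q <= t'}].
  apply: IH => // z; apply: leq_trans (hc z).
  by rewrite ht /= !count_cat /= !count_cat; lia.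
have xq : x \notin q by apply: contra xt' => /sq xt; apply/hasP; exists x.
exists (y :: q); split => /=.
- by rewrite hq.
- by rewrite inE negb_or eq_sym nyx xq; exact: uq.
- by rewrite hxy pq.
- by move=> z /predU1P [->|/sq zt]; apply: yt't; [exact: mem_head | exact: mem_behead].
Qed.

Lemma reflc_walk_path_avoiding (U : finType) (e : rel U) (a n : nat) (w : U)
    (ws : seq U) :
  sorted (reflc e) ws -> (forall z, count_mem z ws <= a) -> walk_bound a n.+1 <= size ws ->
  exists q, is_path_in e (predC1 w) n.+1 q.
Proof.
move=> hwalk hcount hsize.
have [l [u [r [hws hu ht _]]]] := long_free_run (m := (walk_bound a n).+1) w (hcount w) hsize.
case: u hws hu ht => [//|y t] hws /norP [/= yw tw] ht.
have hyt : sorted (reflc e) (y :: t).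
  by apply: (infix_sorted (infix_infix l _ r)); rewrite -hws.
have [q [hq uq pq sq]] : exists q,
    [/\ size q = n, uniq (y :: q), path e y q & {subset q <= t}].
  apply: (reflc_walk_path (a := a)) => // z.
  by apply: leq_trans (hcount z); rewrite hws !count_cat addnCA leq_addr.
exists (y :: q); split => //=; first by rewrite hq.
apply/andP; split => //; apply/allP => z /sq zt /=.
by apply: contraNneq tw => <-; apply/hasP; exists z => /=.
Qed.

Lemma count_map_part (T U : finType) (f : T -> U) (x : U) (s : seq T) :
  uniq s -> count_mem x (map f s) <= #|part f x|.
Proof.
move=> us; rewrite count_map -size_filter -(card_uniqP (filter_uniq _ us)).
apply: subset_leq_card; apply/subsetP => u.
by rewrite mem_filter /part !inE => /andP [].
Qed.

Lemma H_partition_reflc_sorted (T U : finType) (eG : rel T) (eH : rel U) (f : T -> U)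
    (s : seq T) :
  is_H_partition eG eH f -> sorted eG s -> sorted (reflc eH) (map f s).
Proof.
move=> hP; apply: (homo_sorted (e := eG)) => u v huv.
have [->|ne] := eqVneq (f u) (f v); first by rewrite /reflc eqxx.
rewrite /reflc (negbTE ne) hP //.
by apply/existsP; exists u; apply/existsP; exists v; rewrite !inE !eqxx huv.
Qed.

Theorem lemma9 :
  forall a n : nat, 0 < a -> 0 < n ->
  exists n' : nat, 0 < n' /\
    forall (T U : finType) (eG : rel T) (eH : rel U) (f : T -> U),
      simple_graph eG -> simple_graph eH ->
      is_H_partition eG eH f ->
      (forall x : U, #|part f x| <= a) ->
      has_path eG n' ->
      forall w : U, has_path_minus eH w n.
Proof.
move=> a [//|n] _ _; exists (walk_bound a n.+1); split; first by rewrite /= addnS.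
move=> T U eG eH f _ _ hP hA [s [hs us _ ps]] w.
apply: (reflc_walk_path_avoiding (a := a) w (H_partition_reflc_sorted hP ps)).
- by move=> z; apply: leq_trans (count_map_part f z us) (hA z).
- by rewrite size_map hs.
Qed.
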